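(* There exists an absolute constant $C_2>0$ such that for every $\delta_0>0$ the following holds: if $\|\mathcal T-\mathcal S\|_{\mathrm{op}}<\delta_0$, then for all $x^+\in\mathbb R^{2n}$ and all nonzero $u\in\mathbb R^{2n}$, $$\big|u^TH_f(x^+)u-u^TH_g(x^+)u\big|<C_2\delta_0c\,\|u\|^2(\|x\|+\|x^\natural\|)^2,$$ where $H_f,H_g$ denote the Hessians of $f,g$ with respect to $x^+$.
   Context: Let $n,m\ge 1$, $a_1,\dots,a_m\in\mathbb C^n$ and $x^\natural\in\mathbb C^n$ with $x^\natural\neq 0$. For $a,b\in\mathbb C^n$ write $\langle a,b\rangle=\sum_{j}a_j\overline{b_j}$ and let $\|\cdot\|$ be the Euclidean norm. Let $y_i=|\langle a_i,x^\natural\rangle|^2$. For $v\in\mathbb C^n$ put $v^+=(\mathrm{Re}\,v,\mathrm{Im}\,v)\in\mathbb R^{2n}$ and $v^-=(-\mathrm{Im}\,v,\mathrm{Re}\,v)$; $x$ and $x^+$ always correspond. Define $f:\mathbb R^{2n}\to\mathbb R$ by $f(x^+)=\sum_{i=1}^m\big(|\langle a_i,x\rangle|^2-y_i\big)^2$. Fix $\sigma>0$ (in the paper, $\sigma^2=\mathrm{Var}((a_i^+)_1)$ for random measurement vectors), set $c=m\sigma^4$, and define $g(x^+)=8c\left(\|x\|^4+\|x^\natural\|^4-|\langle x,x^\natural\rangle|^2-\|x\|^2\|x^\natural\|^2\right)$. Define the order-4 tensors on $\mathbb R^{2n}$: $\mathcal T=\frac1c\sum_{i=1}^m(a_i^+)^{\otimes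 4}$ and $\mathcal S_{i_1i_2i_3i_4}=\mathbf 1_{i_1=i_2,\,i_3=i_4}+\mathbf 1_{i_1=i_3,\,i_2=i_4}+\mathbf 1_{i_1=i_4,\,i_2=i_3}$, and $\|\mathcal R\|_{\mathrm{op}}=\sup\{\langle \mathcal R,u_1\otimes u_2\otimes u_3\otimes u_4\rangle:\ u_j\in\mathbb R^{2n},\ \|u_1\|\|u_2\|\|u_3\|\|u_4\|=1\}$ (tensor inner product = sum of entrywise products). *)

From HB Require Import structures.
From mathcomp Require Import all_boot all_order all_algebra.
From mathcomp Require Import all_classical all_reals all_analysis.
Set Implicit Arguments. Unset Strict Implicit. Unset Printing Implicit Defensive.
Import Order.TTheory GRing.Theory Num.Theory.
Local Open Scope ring_scope.

Section PhaseRetrieval.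
Variable R : realType.

(* A complex vector v in C^n is represented by the pair (Re v, Im v) of real row vectors. *)
Definition cvec (n : nat) := ('rV[R]_n * 'rV[R]_n)%type.

(* Real and imaginary parts of <a,b> = sum_j a_j * conj(b_j). *)
Definition cinner_re n (a b : cvec n) : R :=
  \sum_(j < n) (a.1 0 j * b.1 0 j + a.2 0 j * b.2 0 j).
Definition cinner_im n (a b : cvec n) : R :=
  \sum_(j < n) (a.2 0 j * b.1 0 j - a.1 0 j * b.2 0 j).
Definition cinner_abs2 n (a b : cvec n) : R :=
  cinner_re a b ^+ 2 + cinner_im a b ^+ 2.
Definition cnorm n (x : cvec n) : R :=
  Num.sqrt (\sum_(j < n) (x.1 0 j ^+ 2 + x.2 0 j ^+ 2)).

Definition plus n (x : cvec n) : 'rV[R]_(n + n) := row_mx x.1 x.2.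
Definition of_plus n (v : 'rV[R]_(n + n)) : cvec n := (lsubmx v, rsubmx v).

Definition enorm N (u : 'rV[R]_N) : R := Num.sqrt (\sum_(j < N) u 0 j ^+ 2).

Definition f_obj n m (a : 'I_m -> cvec n) (xnat : cvec n) (v : 'rV[R]_(n + n)) : R :=
  \sum_(i < m) (cinner_abs2 (a i) (of_plus v) - cinner_abs2 (a i) xnat) ^+ 2.

Definition g_obj n (c : R) (xnat : cvec n) (v : 'rV[R]_(n + n)) : R :=
  let x := of_plus v in
  8 * c * (cnorm x ^+ 4 + cnorm xnat ^+ 4 - cinner_abs2 x xnat
           - cnorm x ^+ 2 * cnorm xnat ^+ 2).

Definition tensor4 N := 'I_N -> 'I_N -> 'I_N -> 'I_N -> R.

Definition T_tensor n m (a : 'I_m -> cvec n) (c : R) : tensor4 (n + n) :=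
  fun i1 i2 i3 i4 => c^-1 * \sum_(i < m)
    (plus (a i) 0 i1 * plus (a i) 0 i2 * plus (a i) 0 i3 * plus (a i) 0 i4).

Definition S_tensor N : tensor4 N :=
  fun i1 i2 i3 i4 =>
    ((i1 == i2) && (i3 == i4))%:R + ((i1 == i3) && (i2 == i4))%:R
    + ((i1 == i4) && (i2 == i3))%:R.

Definition tensor_sub N (A B : tensor4 N) : tensor4 N :=
  fun i1 i2 i3 i4 => A i1 i2 i3 i4 - B i1 i2 i3 i4.

Definition tensor_apply N (A : tensor4 N) (u1 u2 u3 u4 : 'rV[R]_N) : R :=
  \sum_(i1 < N) \sum_(i2 < N) \sum_(i3 < N) \sum_(i4 < N)
    A i1 i2 i3 i4 * u1 0 i1 * u2 0 i2 * u3 0 i3 * u4 0 i4.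

Definition tensor_opnorm N (A : tensor4 N) : R :=
  sup [set r : R | exists u1 u2 u3 u4 : 'rV[R]_N,
         enorm u1 * enorm u2 * enorm u3 * enorm u4 = 1 /\
         r = tensor_apply A u1 u2 u3 u4].

Definition hessian N (F : 'rV[R]_N -> R) (x : 'rV[R]_N) (j k : 'I_N) : R :=
  'D_(delta_mx 0 j) ('D_(delta_mx 0 k) F) x.

Definition hess_quad N (F : 'rV[R]_N -> R) (x u : 'rV[R]_N) : R :=
  \sum_(j < N) \sum_(k < N) u 0 j * hessian F x j k * u 0 k.

End PhaseRetrieval.

From HB Require Import structures.
From mathcomp Require Import all_boot all_order all_algebra.
From mathcomp Require Import all_classical all_reals all_analysis.
From mathcomp Require Import ring lra.
Import Order.TTheory GRing.Theory Num.Theory numFieldNormedType.Exports.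
Local Open Scope classical_set_scope.
Local Open Scope ring_scope.

Set Implicit Arguments.
Unset Strict Implicit.
Unset Printing Implicit Defensive.

(* Write [y = x^+], [z = xnat^+] and [J] for multiplication by [i] on [R^2n].  Since
   [|<a, x>|^2 - |<a, xnat>|^2 = <a^+, y - z> <a^+, y + z> + <a^+, (y - z) J> <a^+, (y + z) J>],
   the objective [f] is a sum of four quartic forms [c T (s1, s2, s3, s4)] whose arguments are
   the affine maps [(y -/+ z) M], [M] in [{1, J}], and [g] is the very same expression with [T]
   replaced by [S].  The Hessian quadratic form of such a quartic at [y] in direction [u] is twice
   the sum of the six values obtained by putting [u M] in two slots and the affine arguments in the
   other two.  Hence [u^T (H_f - H_g) u] is that expression for the tensor [c (T - S)], whose
   operator norm is below [c delta0]; each of its [4 * 2 * 6] terms is at most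
   [c delta0 ||u||^2 * 2 (||x|| + ||xnat||)^2], which gives the constant [97]. *)

Section LinearForms.
Variables (R : realType) (N : nat).
Implicit Types (phi : 'rV[R]_N -> R) (u : 'rV[R]_N).

Let pack phi (phiL : scalar phi) : {scalar 'rV[R]_N} :=
  HB.pack phi (GRing.isLinear.Build _ _ _ _ phi phiL).

Lemma scalar0 phi : scalar phi -> phi 0 = 0.
Proof. by move=> phiL; rewrite -[phi]/(pack phiL : _ -> _) linear0. Qed.

Lemma scalarZ phi a u : scalar phi -> phi (a *: u) = a * phi u.
Proof. by move=> phiL; rewrite -[phi]/(pack phiL : _ -> _) linearZ. Qed.

Lemma scalar_row_sum phi u : scalar phi -> phi u = \sum_(j < N) u 0 j * phi 'e_j.
Proof.
move=> phiL; rewrite -[phi]/(pack phiL : _ -> _) {1}(row_sum_delta u) linear_sum.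
by apply: eq_bigr => j _; rewrite linearZ.
Qed.

Lemma bilinear_row_sum (B : 'rV[R]_N -> 'rV[R]_N -> R) u :
  (forall w, scalar (B ^~ w)) -> (forall w, scalar (B w)) ->
  \sum_(j < N) \sum_(k < N) u 0 j * B 'e_j 'e_k * u 0 k = B u u.
Proof.
move=> BL BR; rewrite (scalar_row_sum u (BL u)); apply: eq_bigr => j _.
rewrite (scalar_row_sum u (BR _)) mulr_sumr; apply: eq_bigr => k _.
by rewrite mulrAC mulrA.
Qed.

End LinearForms.

Section EuclideanNorm.
Variables (R : realType) (N : nat).
Implicit Types (w p q r : 'rV[R]_N).

Lemma enorm_ge0 w : 0 <= enorm w.
Proof. exact: sqrtr_ge0. Qed.

Lemma enorm_sqr w : enorm w ^+ 2 = \sum_(j < N) w 0 j ^+ 2.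
Proof. by rewrite sqr_sqrtr // sumr_ge0 // => j _; exact: sqr_ge0. Qed.

Lemma enorm_coord_le w j : `|w 0 j| <= enorm w.
Proof.
rewrite -sqrtr_sqr ler_sqrt; last by rewrite sumr_ge0 // => i _; exact: sqr_ge0.
by rewrite (bigD1 j) //= lerDl sumr_ge0 // => i _; exact: sqr_ge0.
Qed.

Lemma enormZ (a : R) w : enorm (a *: w) = `|a| * enorm w.
Proof.
rewrite /enorm -sqrtr_sqr -sqrtrM ?sqr_ge0 // mulr_sumr.
by congr Num.sqrt; apply: eq_bigr => j _; rewrite mxE exprMn.
Qed.

Lemma enorm0 : enorm (0 : 'rV[R]_N) = 0.
Proof. by rewrite /enorm big1 ?sqrtr0 // => j _; rewrite mxE expr0n. Qed.

Lemma enorm_gt0 w : w != 0 -> 0 < enorm w.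
Proof.
move=> w_neq0; rewrite lt_def enorm_ge0 andbT; apply: contraNneq w_neq0 => w0.
have /psumr_eq0P w2_eq0 : \sum_(j < N) w 0 j ^+ 2 = 0 by rewrite -enorm_sqr w0 expr0n.
apply/eqP/rowP => j; rewrite mxE; apply/eqP; rewrite -sqrf_eq0.
by apply/eqP/w2_eq0 => // i _; exact: sqr_ge0.
Qed.

Lemma enormN w : enorm (- w) = enorm w.
Proof. by rewrite -scaleN1r enormZ normrN normr1 mul1r. Qed.

Definition vdot p q := \sum_(j < N) p 0 j * q 0 j.

Lemma vdotC p q : vdot p q = vdot q p.
Proof. by apply: eq_bigr => j _; rewrite mulrC. Qed.

Lemma vdotDr p q r : vdot p (q + r) = vdot p q + vdot p r.
Proof. by rewrite /vdot -big_split; apply: eq_bigr => j _; rewrite mxE mulrDr. Qed.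

Lemma vdotNr p q : vdot p (- q) = - vdot p q.
Proof. by rewrite /vdot -sumrN; apply: eq_bigr => j _; rewrite mxE mulrN. Qed.

Lemma vdotDl p q r : vdot (q + r) p = vdot q p + vdot r p.
Proof. by rewrite vdotC vdotDr !(vdotC p). Qed.

Lemma vdotNl p q : vdot (- q) p = - vdot q p.
Proof. by rewrite vdotC vdotNr vdotC. Qed.

Lemma enorm_sqr_vdot p : enorm p ^+ 2 = vdot p p.
Proof. by rewrite enorm_sqr; apply: eq_bigr => j _; rewrite expr2. Qed.

Lemma enorm_vdot p : enorm p = Num.sqrt (vdot p p).
Proof. by congr Num.sqrt; apply: eq_bigr => j _; rewrite expr2. Qed.

Lemma enorm_addr_sqr_le p q : enorm (p + q) ^+ 2 <= 2 * (enorm p + enorm q) ^+ 2.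
Proof.
have parallelogram : enorm (p + q) ^+ 2 + enorm (p - q) ^+ 2 = 2 * (enorm p ^+ 2 + enorm q ^+ 2).
  by rewrite !enorm_sqr_vdot !vdotDr !vdotNr !vdotDl !vdotNl (vdotC q p); ring.
have := sqr_ge0 (enorm (p - q)); have := enorm_ge0 p; have := enorm_ge0 q.
nra.
Qed.

End EuclideanNorm.

Section Tensors.
Variables (R : realType) (N : nat).
Implicit Types (A B E : tensor4 R N) (w : 'rV[R]_N).

Local Ltac tensor_apply_termwise :=
  rewrite /tensor_apply; do 4 (rewrite ?mulr_sumr -?big_split -?sumrB; apply: eq_bigr => ? _).

Lemma tensor_apply_scalar1 A w2 w3 w4 : scalar (fun w => tensor_apply A w w2 w3 w4).
Proof. by move=> a w w'; tensor_apply_termwise; rewrite !mxE /=; ring. Qed.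

Lemma tensor_apply_scalar2 A w1 w3 w4 : scalar (fun w => tensor_apply A w1 w w3 w4).
Proof. by move=> a w w'; tensor_apply_termwise; rewrite !mxE /=; ring. Qed.

Lemma tensor_apply_scalar3 A w1 w2 w4 : scalar (fun w => tensor_apply A w1 w2 w w4).
Proof. by move=> a w w'; tensor_apply_termwise; rewrite !mxE /=; ring. Qed.

Lemma tensor_apply_scalar4 A w1 w2 w3 : scalar (fun w => tensor_apply A w1 w2 w3 w).
Proof. by move=> a w w'; tensor_apply_termwise; rewrite !mxE /=; ring. Qed.

Definition tensor_scale (k : R) A : tensor4 R N := fun i1 i2 i3 i4 => k * A i1 i2 i3 i4.

Lemma tensor_apply_scale k A w1 w2 w3 w4 :
  tensor_apply (tensor_scale k A) w1 w2 w3 w4 = k * tensor_apply A w1 w2 w3 w4.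
Proof. by tensor_apply_termwise; rewrite /tensor_scale; ring. Qed.

Lemma tensor_apply_sub A B w1 w2 w3 w4 :
  tensor_apply (tensor_sub A B) w1 w2 w3 w4 =
  tensor_apply A w1 w2 w3 w4 - tensor_apply B w1 w2 w3 w4.
Proof. by tensor_apply_termwise; rewrite /tensor_sub; ring. Qed.

Lemma tensor_apply_rank1 (al w1 w2 w3 w4 : 'rV[R]_N) :
  tensor_apply (fun i1 i2 i3 i4 => al 0 i1 * al 0 i2 * al 0 i3 * al 0 i4) w1 w2 w3 w4 =
  vdot al w1 * vdot al w2 * vdot al w3 * vdot al w4.
Proof.
rewrite /tensor_apply /vdot -!mulrA mulr_suml; apply: eq_bigr => i1 _.
rewrite mulr_suml mulr_sumr; apply: eq_bigr => i2 _.
rewrite mulr_suml !mulr_sumr; apply: eq_bigr => i3 _.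
rewrite !mulr_sumr; apply: eq_bigr => i4 _.
ring.
Qed.

Lemma tensor_apply_sum m (A : 'I_m -> tensor4 R N) w1 w2 w3 w4 :
  tensor_apply (fun i1 i2 i3 i4 => \sum_(i < m) A i i1 i2 i3 i4) w1 w2 w3 w4 =
  \sum_(i < m) tensor_apply (A i) w1 w2 w3 w4.
Proof.
rewrite /tensor_apply [RHS]exchange_big; apply: eq_bigr => i1 _.
rewrite [RHS]exchange_big; apply: eq_bigr => i2 _.
rewrite [RHS]exchange_big; apply: eq_bigr => i3 _.
rewrite [RHS]exchange_big; apply: eq_bigr => i4 _.
by rewrite !mulr_suml.
Qed.

Lemma sum_delta (F : 'I_N -> R) i : \sum_j (i == j)%:R * F j = F i.
Proof.
rewrite (bigD1 i) //= eqxx mul1r big1 ?addr0 // => j /negPf.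
by rewrite eq_sym => ->; rewrite mul0r.
Qed.

Lemma sum_delta2 (F : 'I_N -> 'I_N -> R) i k :
  \sum_j \sum_l (((i == j) && (k == l))%:R * F j l) = F i k.
Proof.
rewrite -(sum_delta (F ^~ k) i); apply: eq_bigr => j _.
rewrite -(sum_delta (F j) k) mulr_sumr; apply: eq_bigr => l _.
by case: (i == j); case: (k == l); rewrite /= ?(mul0r, mul1r).
Qed.

Lemma tensor_apply_S_tensor w1 w2 w3 w4 :
  tensor_apply (@S_tensor R N) w1 w2 w3 w4 =
  vdot w1 w2 * vdot w3 w4 + vdot w1 w3 * vdot w2 w4 + vdot w1 w4 * vdot w2 w3.
Proof.
pose delta12 (i1 i2 i3 i4 : 'I_N) := ((i1 == i2) && (i3 == i4))%:R : R.
have -> : tensor_apply (@S_tensor R N) w1 w2 w3 w4 =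
    tensor_apply delta12 w1 w2 w3 w4
    + tensor_apply (fun i1 i2 i3 i4 => delta12 i1 i3 i2 i4) w1 w2 w3 w4
    + tensor_apply (fun i1 i2 i3 i4 => delta12 i1 i4 i2 i3) w1 w2 w3 w4.
  by tensor_apply_termwise; rewrite /S_tensor /delta12 /=; ring.
rewrite /tensor_apply /vdot /delta12; congr (_ + _ + _); rewrite mulr_suml;
  apply: eq_bigr => i1 _ /=.
- rewrite -(sum_delta (fun i2 => w1 0 i1 * w2 0 i2 * \sum_(i < N) w3 0 i * w4 0 i)).
  apply: eq_bigr => i2 _; case: eqP => [<-|_] /=; last first.
    by rewrite [RHS]mul0r big1 // => i3 _; rewrite big1 // => i4 _; rewrite !mul0r.
  rewrite mul1r mulr_sumr; apply: eq_bigr => i3 _.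
  rewrite -(sum_delta (fun i4 => w1 0 i1 * w2 0 i1 * (w3 0 i3 * w4 0 i4))).
  by apply: eq_bigr => i4 _; ring.
- rewrite mulr_sumr; apply: eq_bigr => i2 _.
  transitivity (w1 0 i1 * w2 0 i2 * w3 0 i1 * w4 0 i2); last by ring.
  rewrite -(sum_delta2 (fun i3 i4 => w1 0 i1 * w2 0 i2 * w3 0 i3 * w4 0 i4)).
  by do 2 (apply: eq_bigr => ? _); ring.
- rewrite mulr_sumr; apply: eq_bigr => i2 _.
  transitivity (w1 0 i1 * w2 0 i2 * w3 0 i2 * w4 0 i1); last by ring.
  rewrite -(sum_delta2 (fun i3 i4 => w1 0 i1 * w2 0 i2 * w3 0 i3 * w4 0 i4)).
  by do 2 (apply: eq_bigr => ? _); rewrite andbC; ring.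
Qed.

Lemma tensor_apply_le_sum_abs A w1 w2 w3 w4 :
  `|tensor_apply A w1 w2 w3 w4| <=
  (\sum_(i1 < N) \sum_(i2 < N) \sum_(i3 < N) \sum_(i4 < N) `|A i1 i2 i3 i4|)
  * (enorm w1 * enorm w2 * enorm w3 * enorm w4).
Proof.
rewrite /tensor_apply; do 4 (apply: le_trans (ler_norm_sum _ _ _) _;
  rewrite mulr_suml; apply: ler_sum => ? _).
rewrite !normrM !mulrA.
by do 4 (apply: ler_pM; rewrite ?mulr_ge0 ?enorm_coord_le //).
Qed.

Lemma tensor_apply_le_opnorm_unit A u1 u2 u3 u4 :
  enorm u1 * enorm u2 * enorm u3 * enorm u4 = 1 ->
  `|tensor_apply A u1 u2 u3 u4| <= tensor_opnorm A.
Proof.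
have le_sup v1 v2 v3 v4 : enorm v1 * enorm v2 * enorm v3 * enorm v4 = 1 ->
    tensor_apply A v1 v2 v3 v4 <= tensor_opnorm A.
  move=> unit_v; apply: ub_le_sup; last by exists v1, v2, v3, v4.
  exists (\sum_i1 \sum_i2 \sum_i3 \sum_i4 `|A i1 i2 i3 i4|).
  move=> _ [v1' [v2' [v3' [v4' [unit_v' ->]]]]].
  by rewrite -[X in _ <= X]mulr1 -unit_v' (le_trans (ler_norm _)) ?tensor_apply_le_sum_abs.
move=> unit_u; rewrite ler_norml le_sup // andbT.
have := le_sup (- u1) u2 u3 u4; rewrite -scaleN1r (scalarZ _ _ (tensor_apply_scalar1 _ _ _ _)).
by rewrite mulN1r lerNl; apply; rewrite enormZ normrN normr1 mul1r.
Qed.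

Lemma tensor_apply_le_opnorm A w1 w2 w3 w4 :
  `|tensor_apply A w1 w2 w3 w4| <=
  tensor_opnorm A * (enorm w1 * enorm w2 * enorm w3 * enorm w4).
Proof.
have [->|w1_neq0] := eqVneq w1 0.
  by rewrite (scalar0 (tensor_apply_scalar1 _ _ _ _)) enorm0 normr0 !(mul0r, mulr0).
have [->|w2_neq0] := eqVneq w2 0.
  by rewrite (scalar0 (tensor_apply_scalar2 _ _ _ _)) enorm0 normr0 !(mul0r, mulr0).
have [->|w3_neq0] := eqVneq w3 0.
  by rewrite (scalar0 (tensor_apply_scalar3 _ _ _ _)) enorm0 normr0 !(mul0r, mulr0).
have [->|w4_neq0] := eqVneq w4 0.
  by rewrite (scalar0 (tensor_apply_scalar4 _ _ _ _)) enorm0 normr0 !(mul0r, mulr0).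
pose unit w := (enorm w)^-1 *: w.
have unitK w : w != 0 -> enorm w *: unit w = w.
  by move=> w_neq0; rewrite scalerA mulfV ?scale1r // gt_eqF ?enorm_gt0.
have enorm_unit w : w != 0 -> enorm (unit w) = 1.
  by move=> w_neq0; rewrite enormZ ger0_norm ?invr_ge0 ?enorm_ge0 // mulVf // gt_eqF ?enorm_gt0.
rewrite -{1}(unitK w1) // -{1}(unitK w2) // -{1}(unitK w3) // -{1}(unitK w4) //.
rewrite (scalarZ _ _ (tensor_apply_scalar1 _ _ _ _)) (scalarZ _ _ (tensor_apply_scalar2 _ _ _ _)).
rewrite (scalarZ _ _ (tensor_apply_scalar3 _ _ _ _)) (scalarZ _ _ (tensor_apply_scalar4 _ _ _ _)).
rewrite [X in _ <= X]mulrC !mulrA normrM [X in X * _]ger0_norm ?mulr_ge0 ?enorm_ge0 //.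
rewrite ler_wpM2l ?mulr_ge0 ?enorm_ge0 // tensor_apply_le_opnorm_unit //.
by rewrite !enorm_unit ?mulr1.
Qed.

(* The coefficient of [h^2] in [tensor_apply A (s1 + h d1) .. (s4 + h d4)]. *)
Definition tensor_mix2 A (d1 d2 d3 d4 s1 s2 s3 s4 : 'rV[R]_N) :=
  tensor_apply A d1 d2 s3 s4 + tensor_apply A d1 s2 d3 s4 + tensor_apply A d1 s2 s3 d4
  + tensor_apply A s1 d2 d3 s4 + tensor_apply A s1 d2 s3 d4 + tensor_apply A s1 s2 d3 d4.

Definition tensor_bounded E (delta : R) := forall w1 w2 w3 w4,
  `|tensor_apply E w1 w2 w3 w4| <= delta * (enorm w1 * enorm w2 * enorm w3 * enorm w4).

Lemma tensor_bounded_opnorm E delta : tensor_opnorm E <= delta -> tensor_bounded E delta.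
Proof.
move=> opnorm_le w1 w2 w3 w4; apply: le_trans (tensor_apply_le_opnorm _ _ _ _ _) _.
by rewrite ler_wpM2r // !mulr_ge0 ?enorm_ge0.
Qed.

Lemma tensor_sub_scale k A B :
  tensor_sub (tensor_scale k A) (tensor_scale k B) = tensor_scale k (tensor_sub A B).
Proof. by do 4 apply/funext => ?; rewrite /tensor_sub /tensor_scale mulrBr. Qed.

Lemma tensor_bounded_scale k E delta : 0 <= k -> tensor_bounded E delta ->
  tensor_bounded (tensor_scale k E) (k * delta).
Proof.
move=> k_ge0 E_bounded w1 w2 w3 w4.
by rewrite tensor_apply_scale normrM ger0_norm // -[k * delta * _]mulrA ler_wpM2l.
Qed.

Lemma tensor_mix2_le E delta (a K : R) d1 d2 d3 d4 s1 s2 s3 s4 :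
  tensor_bounded E delta -> 0 <= delta ->
  enorm d1 = a -> enorm d2 = a -> enorm d3 = a -> enorm d4 = a ->
  enorm s1 ^+ 2 <= K -> enorm s2 ^+ 2 <= K -> enorm s3 ^+ 2 <= K -> enorm s4 ^+ 2 <= K ->
  `|tensor_mix2 E d1 d2 d3 d4 s1 s2 s3 s4| <= 6 * (delta * (a ^+ 2 * K)).
Proof.
move=> E_bounded delta_ge0 d1a d2a d3a d4a s1K s2K s3K s4K.
have term v1 v2 v3 v4 (s s' : 'rV[R]_N) :
    enorm v1 * enorm v2 * enorm v3 * enorm v4 = a ^+ 2 * (enorm s * enorm s') ->
    enorm s ^+ 2 <= K -> enorm s' ^+ 2 <= K ->
    `|tensor_apply E v1 v2 v3 v4| <= delta * (a ^+ 2 * K).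
  move=> normsE sK s'K; apply: le_trans (E_bounded _ _ _ _) _.
  rewrite normsE ler_wpM2l // ler_wpM2l ?sqr_ge0 //.
  by have := enorm_ge0 s; have := enorm_ge0 s'; nra.
set b := delta * (a ^+ 2 * K).
have t1 : `|tensor_apply E d1 d2 s3 s4| <= b.
  by apply: (term _ _ _ _ s3 s4) => //; rewrite d1a d2a; ring.
have t2 : `|tensor_apply E d1 s2 d3 s4| <= b.
  by apply: (term _ _ _ _ s2 s4) => //; rewrite d1a d3a; ring.
have t3 : `|tensor_apply E d1 s2 s3 d4| <= b.
  by apply: (term _ _ _ _ s2 s3) => //; rewrite d1a d4a; ring.
have t4 : `|tensor_apply E s1 d2 d3 s4| <= b.
  by apply: (term _ _ _ _ s1 s4) => //; rewrite d2a d3a; ring.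
have t5 : `|tensor_apply E s1 d2 s3 d4| <= b.
  by apply: (term _ _ _ _ s1 s3) => //; rewrite d2a d4a; ring.
have t6 : `|tensor_apply E s1 s2 d3 d4| <= b.
  by apply: (term _ _ _ _ s1 s2) => //; rewrite d3a d4a; ring.
rewrite /tensor_mix2 (_ : 6 * b = b + b + b + b + b + b); last by ring.
apply: le_trans (ler_normD _ _) (lerD _ t6).
apply: le_trans (ler_normD _ _) (lerD _ t5).
apply: le_trans (ler_normD _ _) (lerD _ t4).
apply: le_trans (ler_normD _ _) (lerD _ t3).
exact: le_trans (ler_normD _ _) (lerD t1 t2).
Qed.

End Tensors.

Section SecondDerivatives.
Variables (R : realType) (N : nat).

Lemma is_derive_slope (V W : normedModType R) (f : V -> W) (g : R -> W) x v :
  (forall h, f (h *: v + x) = f x + h *: g h) -> {for 0, continuous g} ->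
  is_derive x v f (g 0).
Proof.
move=> f_expand g_cont.
have slope_cvg : (fun h : R => h^-1 *: ((f \o shift x) (h *: v) - f x)) @ 0^' --> g 0.
  have slopeE : {near 0^', g =1 fun h : R => h^-1 *: ((f \o shift x) (h *: v) - f x)}.
    near=> h; have h_neq0 : h != 0 by near: h; exact: nbhs_dnbhs_neq.
    by rewrite /= f_expand addrAC subrr add0r scalerA mulVf ?scale1r.
  by apply: cvg_trans (near_eq_cvg slopeE) _; exact: cvg_within_filter.
apply: DeriveDef; last exact: cvg_lim slope_cvg.
by apply/cvg_ex; exists (g 0).
Unshelve. all: by end_near.
Qed.

Definition derivable2 (F : 'rV[R]_N -> R) :=
  (forall y w, derivable F y w) /\ (forall w y w', derivable ('D_w F) y w').

Lemma deriveD_fun (F G : 'rV[R]_N -> R) w : derivable2 F -> derivable2 G ->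
  'D_w (F + G) = 'D_w F + 'D_w G.
Proof. by move=> [dF _] [dG _]; apply/funext => y /=; rewrite deriveD. Qed.

Lemma derivable2D (F G : 'rV[R]_N -> R) : derivable2 F -> derivable2 G -> derivable2 (F + G).
Proof.
move=> dF dG; split=> [y w|w y w']; first exact: derivableD (dF.1 y w) (dG.1 y w).
by rewrite deriveD_fun //; exact: derivableD (dF.2 w y w') (dG.2 w y w').
Qed.

Lemma hess_quadD (F G : 'rV[R]_N -> R) y u : derivable2 F -> derivable2 G ->
  hess_quad (F + G) y u = hess_quad F y u + hess_quad G y u.
Proof.
move=> dF dG; rewrite /hess_quad -big_split; apply: eq_bigr => j _.
rewrite -big_split; apply: eq_bigr => k _ /=.
rewrite /hessian deriveD_fun // deriveD; [ring | exact: dF.2 | exact: dG.2].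
Qed.

End SecondDerivatives.

Section QuarticForms.
Variables (R : realType) (N : nat).
Implicit Types (A : tensor4 R N) (y w : 'rV[R]_N).

Definition affmap := ('M[R]_N * 'rV[R]_N)%type.
Definition aff (p : affmap) y := y *m p.1 + p.2.
Definition aff_deriv (p : affmap) w : affmap := (0, w *m p.1).

Definition quartic A (p1 p2 p3 p4 : affmap) y :=
  tensor_apply A (aff p1 y) (aff p2 y) (aff p3 y) (aff p4 y).

Lemma aff_shift (p : affmap) h w y : aff p (h *: w + y) = h *: (w *m p.1) + aff p y.
Proof. by rewrite /aff mulmxDl scalemxAl addrA. Qed.

Lemma aff_derivE (p : affmap) w y : aff (aff_deriv p w) y = w *m p.1.
Proof. by rewrite /aff mulmx0 add0r. Qed.

Section Derivatives.
Variables (A : tensor4 R N) (p1 p2 p3 p4 : affmap).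
Local Notation TA := (tensor_apply A).

Lemma is_derive_quartic y w :
  is_derive y w (quartic A p1 p2 p3 p4)
    (quartic A (aff_deriv p1 w) p2 p3 p4 y + quartic A p1 (aff_deriv p2 w) p3 p4 y
     + quartic A p1 p2 (aff_deriv p3 w) p4 y + quartic A p1 p2 p3 (aff_deriv p4 w) y).
Proof.
rewrite /quartic !aff_derivE.
set d1 := w *m p1.1; set d2 := w *m p2.1; set d3 := w *m p3.1; set d4 := w *m p4.1.
set s1 := aff p1 y; set s2 := aff p2 y; set s3 := aff p3 y; set s4 := aff p4 y.
pose P : {poly R} :=
  (TA d1 s2 s3 s4 + TA s1 d2 s3 s4 + TA s1 s2 d3 s4 + TA s1 s2 s3 d4)%:P
  + tensor_mix2 A d1 d2 d3 d4 s1 s2 s3 s4 *: 'X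
  + (TA d1 d2 d3 s4 + TA d1 d2 s3 d4 + TA d1 s2 d3 d4 + TA s1 d2 d3 d4) *: 'X^2
  + TA d1 d2 d3 d4 *: 'X^3.
have -> : TA d1 s2 s3 s4 + TA s1 d2 s3 s4 + TA s1 s2 d3 s4 + TA s1 s2 s3 d4 = P.[0].
  by rewrite !hornerE /=; ring.
apply: is_derive_slope; last exact: continuous_horner.
move=> h; rewrite !aff_shift -/d1 -/d2 -/d3 -/d4 -/s1 -/s2 -/s3 -/s4.
rewrite !tensor_apply_scalar1 !tensor_apply_scalar2 !tensor_apply_scalar3 !tensor_apply_scalar4.
by rewrite !hornerE /tensor_mix2 /GRing.scale /=; ring.
Qed.

Lemma derive_quartic y w :
  'D_w (quartic A p1 p2 p3 p4) y =
  quartic A (aff_deriv p1 w) p2 p3 p4 y + quartic A p1 (aff_deriv p2 w) p3 p4 y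
  + quartic A p1 p2 (aff_deriv p3 w) p4 y + quartic A p1 p2 p3 (aff_deriv p4 w) y.
Proof. exact: (@derive_val _ _ _ _ _ _ _ (is_derive_quartic y w)). Qed.

Lemma derivable_quartic y w : derivable (quartic A p1 p2 p3 p4) y w.
Proof. exact: (@ex_derive _ _ _ _ _ _ _ (is_derive_quartic y w)). Qed.

Lemma derive_quartic_fun w :
  'D_w (quartic A p1 p2 p3 p4) =
  quartic A (aff_deriv p1 w) p2 p3 p4 + quartic A p1 (aff_deriv p2 w) p3 p4
  + quartic A p1 p2 (aff_deriv p3 w) p4 + quartic A p1 p2 p3 (aff_deriv p4 w).
Proof. by apply/funext => y; rewrite derive_quartic. Qed.

End Derivatives.

Lemma derivable2_quartic A p1 p2 p3 p4 : derivable2 (quartic A p1 p2 p3 p4).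
Proof.
split=> [|w y w']; first exact: derivable_quartic.
rewrite derive_quartic_fun.
by apply: derivableD; [apply: derivableD; [apply: derivableD|]|]; exact: derivable_quartic.
Qed.

Section Hessian.
Variables (A : tensor4 R N) (p1 p2 p3 p4 : affmap) (y : 'rV[R]_N).
Local Notation TA := (tensor_apply A).
Local Notation s1 := (aff p1 y).
Local Notation s2 := (aff p2 y).
Local Notation s3 := (aff p3 y).
Local Notation s4 := (aff p4 y).

Definition quartic_hessian w w' :=
    TA (w' *m p1.1) (w *m p2.1) s3 s4 + TA (w *m p1.1) (w' *m p2.1) s3 s4
  + TA (w' *m p1.1) s2 (w *m p3.1) s4 + TA (w *m p1.1) s2 (w' *m p3.1) s4
  + TA (w' *m p1.1) s2 s3 (w *m p4.1) + TA (w *m p1.1) s2 s3 (w' *m p4.1)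
  + TA s1 (w' *m p2.1) (w *m p3.1) s4 + TA s1 (w *m p2.1) (w' *m p3.1) s4
  + TA s1 (w' *m p2.1) s3 (w *m p4.1) + TA s1 (w *m p2.1) s3 (w' *m p4.1)
  + TA s1 s2 (w' *m p3.1) (w *m p4.1) + TA s1 s2 (w *m p3.1) (w' *m p4.1).

Lemma hessian_quartic j k :
  hessian (quartic A p1 p2 p3 p4) y j k = quartic_hessian 'e_j 'e_k.
Proof.
have dQ := derivable_quartic.
rewrite /hessian derive_quartic_fun.
rewrite deriveD; [|by apply: derivableD; [apply: derivableD|]; exact: dQ | exact: dQ].
rewrite deriveD; [|by apply: derivableD; exact: dQ | exact: dQ].
rewrite deriveD; [|exact: dQ | exact: dQ].
rewrite !derive_quartic /quartic !aff_derivE /=.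
rewrite !mulmx0 (scalar0 (tensor_apply_scalar1 _ _ _ _)) (scalar0 (tensor_apply_scalar2 _ _ _ _)).
rewrite (scalar0 (tensor_apply_scalar3 _ _ _ _)) (scalar0 (tensor_apply_scalar4 _ _ _ _)).
by rewrite /quartic_hessian; ring.
Qed.

Lemma hess_quad_quartic u :
  hess_quad (quartic A p1 p2 p3 p4) y u =
  2 * tensor_mix2 A (u *m p1.1) (u *m p2.1) (u *m p3.1) (u *m p4.1) s1 s2 s3 s4.
Proof.
rewrite /hess_quad.
under eq_bigr => j _ do under eq_bigr => k _ do rewrite hessian_quartic.
rewrite bilinear_row_sum /quartic_hessian /tensor_mix2; first by ring.
all: move=> w a w1 w2; rewrite !mulmxDl -!scalemxAl.
all: rewrite !tensor_apply_scalar1 !tensor_apply_scalar2 !tensor_apply_scalar3.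
all: by rewrite !tensor_apply_scalar4; ring.
Qed.

End Hessian.
End QuarticForms.

Section ComplexCoordinates.
Variables (R : realType) (n : nat).
Implicit Types (p q : 'rV[R]_(n + n)) (x : cvec R n).

(* Multiplication by [i] in real coordinates: [plus x *m imul_mx] is the vector [x^-]. *)
Definition imul_mx : 'M[R]_(n + n) := block_mx 0 1%:M (- 1%:M) 0.

Lemma row_mx_mul_imul (q1 q2 : 'rV[R]_n) : row_mx q1 q2 *m imul_mx = row_mx (- q2) q1.
Proof. by rewrite mul_row_block !mulmx0 mulmx1 mulmxN mulmx1 add0r addr0. Qed.

Lemma vdot_row_mx (p1 p2 q1 q2 : 'rV[R]_n) :
  vdot (row_mx p1 p2) (row_mx q1 q2) = \sum_(j < n) (p1 0 j * q1 0 j + p2 0 j * q2 0 j).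
Proof.
rewrite /vdot big_split_ord big_split /=.
by congr (_ + _); apply: eq_bigr => j _; rewrite ?row_mxEl ?row_mxEr.
Qed.

Lemma vdot_imul p q : vdot (p *m imul_mx) (q *m imul_mx) = vdot p q.
Proof.
rewrite -(hsubmxK p) -(hsubmxK q) !row_mx_mul_imul !vdot_row_mx.
by apply: eq_bigr => j _; rewrite !mxE; ring.
Qed.

Lemma vdot_imull p q : vdot (p *m imul_mx) q = - vdot p (q *m imul_mx).
Proof.
rewrite -(hsubmxK p) -(hsubmxK q) !row_mx_mul_imul !vdot_row_mx -sumrN.
by apply: eq_bigr => j _; rewrite !mxE; ring.
Qed.

Lemma vdot_imul_self p : vdot p (p *m imul_mx) = 0.
Proof.
rewrite -(hsubmxK p) row_mx_mul_imul vdot_row_mx big1 // => j _.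
by rewrite !mxE; ring.
Qed.

Lemma enorm_imul p : enorm (p *m imul_mx) = enorm p.
Proof. by rewrite !enorm_vdot vdot_imul. Qed.

Lemma cinner_re_vdot (a x : cvec R n) : cinner_re a x = vdot (plus a) (plus x).
Proof. by rewrite vdot_row_mx. Qed.

Lemma cinner_im_vdot (a x : cvec R n) : cinner_im a x = vdot (plus a) (plus x *m imul_mx).
Proof.
by rewrite /plus row_mx_mul_imul vdot_row_mx; apply: eq_bigr => j _; rewrite !mxE; ring.
Qed.

Lemma cnorm_enorm x : cnorm x = enorm (plus x).
Proof.
by rewrite enorm_vdot vdot_row_mx; congr Num.sqrt; apply: eq_bigr => j _; rewrite !expr2.
Qed.

Lemma plus_of_plus p : plus (of_plus p) = p.
Proof. exact: hsubmxK. Qed.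

Lemma plus_eq0 x : plus x = 0 -> x = (0, 0).
Proof.
by rewrite /plus -row_mx0 => /eq_row_mx[x1 x2]; rewrite [x]surjective_pairing x1 x2.
Qed.

End ComplexCoordinates.

Arguments imul_mx {R n}.

Section PhaseRetrievalQuartics.
Variables (R : realType) (n : nat).
Local Notation N := (n + n).
Implicit Types (A B E : tensor4 R N) (y z u : 'rV[R]_N).

Definition sq_diff_quartic A z (M M' : 'M[R]_N) :=
  quartic A (M, - (z *m M)) (M, z *m M) (M', - (z *m M')) (M', z *m M').

(* [Re <a, x> ^+ 2 - Re <a, x0> ^+ 2 = <a^+, x^+ - x0^+> <a^+, x^+ + x0^+>], and likewise for
   the imaginary parts with [imul_mx] applied to [x^+] and [x0^+]; squaring the sum of these two
   products gives the four terms below. *)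
Definition phase_quartic A z :=
  sq_diff_quartic A z 1%:M 1%:M + sq_diff_quartic A z 1%:M imul_mx
  + sq_diff_quartic A z imul_mx 1%:M + sq_diff_quartic A z imul_mx imul_mx.

Lemma tensor_apply_T_tensor m (a : 'I_m -> cvec R n) (c : R) w1 w2 w3 w4 :
  tensor_apply (T_tensor a c) w1 w2 w3 w4 =
  c^-1 * \sum_(i < m) (vdot (plus (a i)) w1 * vdot (plus (a i)) w2 *
                       vdot (plus (a i)) w3 * vdot (plus (a i)) w4).
Proof.
have -> : T_tensor a c = tensor_scale c^-1 (fun i1 i2 i3 i4 => \sum_(i < m)
    (fun j1 j2 j3 j4 => plus (a i) 0 j1 * plus (a i) 0 j2 * plus (a i) 0 j3 * plus (a i) 0 j4)
    i1 i2 i3 i4) by [].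
rewrite tensor_apply_scale tensor_apply_sum; congr (_ * _).
by apply: eq_bigr => i _; exact: tensor_apply_rank1.
Qed.

Lemma f_obj_phase_quartic m (a : 'I_m -> cvec R n) (x0 : cvec R n) (c : R) : c != 0 ->
  f_obj a x0 = phase_quartic (tensor_scale c (T_tensor a c)) (plus x0).
Proof.
move=> c_neq0; apply/funext => y.
rewrite /phase_quartic !addrfctE /sq_diff_quartic /quartic /aff /=.
rewrite !(tensor_apply_scale c) !tensor_apply_T_tensor.
rewrite !mulrA mulfV // !mul1r /f_obj -!big_split; apply: eq_bigr => i _ /=.
rewrite /cinner_abs2 !cinner_re_vdot !cinner_im_vdot plus_of_plus !mulmx1 !vdotDr !vdotNr.
ring.
Qed.

Lemma g_obj_phase_quartic (x0 : cvec R n) (c : R) :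
  g_obj c x0 = phase_quartic (tensor_scale c (@S_tensor R N)) (plus x0).
Proof.
have sqr_sqr (r : R) : r ^+ 4 = (r ^+ 2) ^+ 2 by rewrite -exprM.
apply/funext => y; rewrite /g_obj !sqr_sqr !cnorm_enorm !enorm_sqr_vdot.
rewrite /cinner_abs2 cinner_re_vdot cinner_im_vdot plus_of_plus.
rewrite /phase_quartic !addrfctE /sq_diff_quartic /quartic /aff /=.
rewrite !tensor_apply_scale !tensor_apply_S_tensor.
rewrite !mulmx1 !vdotDr !vdotNr !vdotDl !vdotNl !vdot_imul !vdot_imull !vdot_imul_self.
rewrite [vdot (plus x0) (y *m _)]vdotC vdot_imull (vdotC (plus x0) y).
ring.
Qed.

Lemma hess_quad_phase_quartic A z y u :
  hess_quad (phase_quartic A z) y u =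
  hess_quad (sq_diff_quartic A z 1%:M 1%:M) y u
  + hess_quad (sq_diff_quartic A z 1%:M imul_mx) y u
  + hess_quad (sq_diff_quartic A z imul_mx 1%:M) y u
  + hess_quad (sq_diff_quartic A z imul_mx imul_mx) y u.
Proof.
have dQ M M' : derivable2 (sq_diff_quartic A z M M') by exact: derivable2_quartic.
rewrite hess_quadD; [|by apply: derivable2D; [apply: derivable2D|]; exact: dQ | exact: dQ].
rewrite hess_quadD; [|by apply: derivable2D; exact: dQ | exact: dQ].
by rewrite hess_quadD; [|exact: dQ | exact: dQ].
Qed.

Lemma hess_quad_phase_quartic_sub A B z y u :
  hess_quad (phase_quartic A z) y u - hess_quad (phase_quartic B z) y u =
  hess_quad (phase_quartic (tensor_sub A B) z) y u.
Proof.
rewrite !hess_quad_phase_quartic /sq_diff_quartic !hess_quad_quartic /tensor_mix2.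
by rewrite !tensor_apply_sub; ring.
Qed.

Lemma hess_quad_sq_diff_le E delta z M M' y u :
  tensor_bounded E delta -> 0 <= delta ->
  (forall p, enorm (p *m M) = enorm p) -> (forall p, enorm (p *m M') = enorm p) ->
  `|hess_quad (sq_diff_quartic E z M M') y u| <=
  12 * (delta * (enorm u ^+ 2 * (2 * (enorm y + enorm z) ^+ 2))).
Proof.
move=> E_bounded delta_ge0 M_iso M'_iso.
have slot_sub_le (P : 'M[R]_N) : (forall p, enorm (p *m P) = enorm p) ->
    enorm (y *m P + - (z *m P)) ^+ 2 <= 2 * (enorm y + enorm z) ^+ 2.
  by move=> P_iso; rewrite -mulNmx -mulmxDl P_iso -(enormN z) enorm_addr_sqr_le.
have slot_add_le (P : 'M[R]_N) : (forall p, enorm (p *m P) = enorm p) ->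
    enorm (y *m P + z *m P) ^+ 2 <= 2 * (enorm y + enorm z) ^+ 2.
  by move=> P_iso; rewrite -mulmxDl P_iso enorm_addr_sqr_le.
rewrite /sq_diff_quartic hess_quad_quartic /aff /= normrM ger0_norm //.
rewrite (_ : 12 * _ = 2 * (6 * (delta * (enorm u ^+ 2 * (2 * (enorm y + enorm z) ^+ 2))))).
  by rewrite ler_wpM2l // tensor_mix2_le ?slot_sub_le ?slot_add_le.
by ring.
Qed.

Lemma hess_quad_phase_quartic_le E delta z y u :
  tensor_bounded E delta -> 0 <= delta ->
  `|hess_quad (phase_quartic E z) y u| <=
  96 * delta * enorm u ^+ 2 * (enorm y + enorm z) ^+ 2.
Proof.
move=> E_bounded delta_ge0.
have id_iso (p : 'rV[R]_N) : enorm (p *m 1%:M) = enorm p by rewrite mulmx1.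
have imul_iso := @enorm_imul R n.
have term_le M M' := hess_quad_sq_diff_le z y u E_bounded delta_ge0 (M := M) (M' := M').
rewrite hess_quad_phase_quartic.
set b := 12 * _ in term_le.
rewrite (_ : 96 * delta * _ * _ = b + b + b + b); last by rewrite /b; ring.
apply: le_trans (ler_normD _ _) (lerD _ (term_le _ _ imul_iso imul_iso)).
apply: le_trans (ler_normD _ _) (lerD _ (term_le _ _ imul_iso id_iso)).
exact: le_trans (ler_normD _ _) (lerD (term_le _ _ id_iso id_iso) (term_le _ _ id_iso imul_iso)).
Qed.

End PhaseRetrievalQuartics.

Theorem proposition4 (R : realType) :
  exists C2 : R, 0 < C2 /\
  forall (n m : nat) (a : 'I_m -> cvec R n) (xnat : cvec R n) (sigma delta0 : R),
    (0 < n)%N -> (0 < m)%N -> xnat <> (0, 0) -> 0 < sigma -> 0 < delta0 ->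
    let c := m%:R * sigma ^+ 4 in
    tensor_opnorm (tensor_sub (T_tensor a c) (@S_tensor R (n + n))) < delta0 ->
    forall (v u : 'rV[R]_(n + n)), u != 0 ->
      `| hess_quad (f_obj a xnat) v u - hess_quad (g_obj c xnat) v u |
        < C2 * delta0 * c * enorm u ^+ 2 * (cnorm (of_plus v) + cnorm xnat) ^+ 2.
Proof.
exists 97; split => // n m a xnat sigma delta0 _ m_gt0 xnat_neq0 sigma_gt0 delta0_gt0 c
  opnorm_lt v u u_neq0.
have c_gt0 : 0 < c by rewrite mulr_gt0 ?ltr0n ?exprn_gt0.
have diff_bounded : tensor_bounded
    (tensor_sub (tensor_scale c (T_tensor a c)) (tensor_scale c (@S_tensor R (n + n))))
    (c * delta0).
  rewrite tensor_sub_scale; apply: tensor_bounded_scale; first exact: ltW.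
  exact/tensor_bounded_opnorm/ltW.
rewrite (f_obj_phase_quartic a xnat (lt0r_neq0 c_gt0)) g_obj_phase_quartic.
rewrite hess_quad_phase_quartic_sub.
rewrite !cnorm_enorm plus_of_plus.
apply: le_lt_trans (hess_quad_phase_quartic_le _ _ _ diff_bounded _) _.
  by rewrite mulr_ge0 ?ltW.
have norms_gt0 : 0 < enorm u ^+ 2 * (enorm v + enorm (plus xnat)) ^+ 2.
  rewrite mulr_gt0 ?exprn_gt0 ?enorm_gt0 // ltr_wpDl ?enorm_ge0 // enorm_gt0 //.
  by apply: contra_not_neq xnat_neq0 => /plus_eq0.
have cd_gt0 : 0 < c * delta0 by rewrite mulr_gt0.
nra.
Qed.
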